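(* Let $\beta_1,\beta_2,\gamma_1,\gamma_2>0$ and $0<\sigma_{21}\le\sigma_{12}\le1$ be fixed, and for $\mu>0$ set $\mathcal R_i=\beta_i/(\gamma_i+\mu)$. Then there exists $\mu^*\in(0,\min\{\gamma_1,\gamma_2\})$ such that for all $0<\mu<\mu^*$: (i) If $(\mathcal R_1,\mathcal R_2)\in\Omega^\mu$, then system (M) has a unique feasible steady state with $I_1^*>0$ and $I_2^*>0$, and it satisfies $S^*=s_0+\mathcal O(\mu)$ and $I_i^*=\mu b_i+\mathcal O(\mu^2)$ for $i=1,2$ as $\mu\to0^+$, where $s_0$ is the positive root of $p_s(s)=as^2+bs+c$ and $$b_1=\frac{s_0+\sigma_{12}(1-s_0)}{\gamma_1\sigma_{12}}(1-\mathcal R_2s_0),\qquad b_2=\frac{s_0+\sigma_{21}(1-s_0)}{\gamma_2\sigma_{21}}(1-\mathcal R_1s_0).$$ (ii) If $(\mathcal R_1,\mathcal R_2)\notin\Omega^\mu$, then system (M) has no steady state with $I_1^*>0$ and $I_2^*>0$ that is feasible.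
   Context: System (M) is the two-strain epidemic model for $(S,I_1,I_2,J_1,J_2,R_1,R_2,R_3)$ (the letters $R_1,R_2,R_3$ denote compartments, while $\mathcal R_1,\mathcal R_2$ denote numbers): $S'=\mu-\beta_1(I_1+J_1)S-\beta_2(I_2+J_2)S-\mu S$, $I_1'=\beta_1S(I_1+J_1)-(\mu+\gamma_1)I_1$, $I_2'=\beta_2S(I_2+J_2)-(\mu+\gamma_2)I_2$, $J_1'=\beta_1\sigma_{21}R_2(I_1+J_1)-(\mu+\gamma_1)J_1$, $J_2'=\beta_2\sigma_{12}R_1(I_2+J_2)-(\mu+\gamma_2)J_2$, $R_1'=\gamma_1I_1-\beta_2\sigma_{12}(I_2+J_2)R_1-\mu R_1$, $R_2'=\gamma_2I_2-\beta_1\sigma_{21}(I_1+J_1)R_2-\mu R_2$, $R_3'=\gamma_1J_1+\gamma_2J_2-\mu R_3$. A steady state is a zero of the right-hand side; it is feasible if all components are nonnegative and sum to 1. For $\mu\ge 0$, $\Omega^\mu=\Omega^\mu_1\cap\Omega^\mu_2$ where, for $\{i,j\}=\{1,2\}$, $\Omega^\mu_i=\left\{(\mathcal R_1,\mathcal R_2):\ \mathcal R_i>1,\ \mathcal R_j>\dfrac{(\gamma_i+\mu)\mathcal R_i}{(1+\sigma_{ij}(\mathcal R_i-1))\gamma_i+\mu}\right\}$. The quadratic $p_s(s)=as^2+bs+c$ has coefficients $a=\sigma_{12}(1-\sigma_{21})\mathcal R_1+\sigma_{21}(1-\sigma_{12})\mathcal R_2$, $b=\sigma_{12}\sigma_{21}(\mathcal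 R_1+\mathcal R_2)-(\sigma_{12}+\sigma_{21}-\sigma_{12}\sigma_{21})$, $c=-\sigma_{12}\sigma_{21}$; when $a>0$ it has exactly one positive root since $c<0$ (when $a=0$, i.e. $\sigma_{12}=\sigma_{21}=1$, $s_0=1/(\mathcal R_1+\mathcal R_2-1)$). *)

From Stdlib Require Import Reals.
Open Scope R_scope.

Record state : Type := mkState {
  sS : R; sI1 : R; sI2 : R; sJ1 : R; sJ2 : R; sR1 : R; sR2 : R; sR3 : R }.

Definition steady_state (beta1 beta2 gamma1 gamma2 sigma12 sigma21 mu : R)
    (x : state) : Prop :=
  let S := sS x in let I1 := sI1 x in let I2 := sI2 x in
  let J1 := sJ1 x in let J2 := sJ2 x in
  let R1 := sR1 x in let R2 := sR2 x in let R3 := sR3 x in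
  mu - beta1 * (I1 + J1) * S - beta2 * (I2 + J2) * S - mu * S = 0 /\
  beta1 * S * (I1 + J1) - (mu + gamma1) * I1 = 0 /\
  beta2 * S * (I2 + J2) - (mu + gamma2) * I2 = 0 /\
  beta1 * sigma21 * R2 * (I1 + J1) - (mu + gamma1) * J1 = 0 /\
  beta2 * sigma12 * R1 * (I2 + J2) - (mu + gamma2) * J2 = 0 /\
  gamma1 * I1 - beta2 * sigma12 * (I2 + J2) * R1 - mu * R1 = 0 /\
  gamma2 * I2 - beta1 * sigma21 * (I1 + J1) * R2 - mu * R2 = 0 /\
  gamma1 * J1 + gamma2 * J2 - mu * R3 = 0.

Definition feasible (x : state) : Prop :=
  0 <= sS x /\ 0 <= sI1 x /\ 0 <= sI2 x /\ 0 <= sJ1 x /\ 0 <= sJ2 x /\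
  0 <= sR1 x /\ 0 <= sR2 x /\ 0 <= sR3 x /\
  sS x + sI1 x + sI2 x + sJ1 x + sJ2 x + sR1 x + sR2 x + sR3 x = 1.

Definition repr_num (beta gamma mu : R) : R := beta / (gamma + mu).

Definition Omega_i (gammai sigmaij mu Ri Rj : R) : Prop :=
  Ri > 1 /\ Rj > (gammai + mu) * Ri / ((1 + sigmaij * (Ri - 1)) * gammai + mu).

Definition Omega (gamma1 gamma2 sigma12 sigma21 mu Rn1 Rn2 : R) : Prop :=
  Omega_i gamma1 sigma12 mu Rn1 Rn2 /\ Omega_i gamma2 sigma21 mu Rn2 Rn1.

Definition ps (sigma12 sigma21 Rn1 Rn2 s : R) : R :=
  let a := sigma12 * (1 - sigma21) * Rn1 + sigma21 * (1 - sigma12) * Rn2 in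
  let b := sigma12 * sigma21 * (Rn1 + Rn2)
           - (sigma12 + sigma21 - sigma12 * sigma21) in
  let c := - (sigma12 * sigma21) in
  a * s ^ 2 + b * s + c.

Definition coef_b1 (gamma1 sigma12 Rn2 s0 : R) : R :=
  (s0 + sigma12 * (1 - s0)) / (gamma1 * sigma12) * (1 - Rn2 * s0).

Definition coef_b2 (gamma2 sigma21 Rn1 s0 : R) : R :=
  (s0 + sigma21 * (1 - s0)) / (gamma2 * sigma21) * (1 - Rn1 * s0).

From Stdlib Require Import Reals Lra Psatz.
Open Scope R_scope.

(* Write a_i = 1/R_i = (gamma_i + mu)/beta_i and G_i = gamma_i/(gamma_i + mu). At a steady state
   with both strains present the compartments R_1, R_2 are (a_2 - S)/sigma12 and (a_1 - S)/sigma21,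
   and the two forces of infection (divided by mu) solve a 2x2 linear system with determinant
   det(S) = G_1 G_2 S^2 - (a_1 - S)(a_2 - S). The S-equation then becomes F(S) = 0 for a cubic F
   with positive leading coefficient. At every root of F with 0 < S <= a_i and det(S) > 0 one
   computes F'(S) < 0; as det increases on [0, min a_i], a cubic cannot cross zero downwards twice
   there, so such a root is unique and exists exactly when F(min a_i) < 0, which unfolds to
   Omega^mu. As mu -> 0 the G_i tend to 1, where F is a multiple of p_s; hence the root lies
   within O(mu) of s_0, and the infected fractions, being Lipschitz in S, agree with mu b_i up
   to O(mu^2). *)

(** * Cubic polynomials *)

Definition cubic (c3 c2 c1 c0 x : R) : R := c3 * x ^ 3 + c2 * x ^ 2 + c1 * x + c0.
Definition cubic_deriv (c3 c2 c1 x : R) : R := 3 * c3 * x ^ 2 + 2 * c2 * x + c1.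

Section Cubic.
Variables c3 c2 c1 c0 : R.

Definition cubic_quot (r x : R) : R := c3 * x ^ 2 + (c3 * r + c2) * x + (c3 * r ^ 2 + c2 * r + c1).

Lemma cubic_continuous : continuity (cubic c3 c2 c1 c0).
Proof. unfold cubic; reg. Qed.

Lemma cubic_sub r x : cubic c3 c2 c1 c0 x - cubic c3 c2 c1 c0 r = (x - r) * cubic_quot r x.
Proof. unfold cubic, cubic_quot; ring. Qed.

Lemma cubic_quot_diag r : cubic_quot r r = cubic_deriv c3 c2 c1 r.
Proof. unfold cubic_quot, cubic_deriv; ring. Qed.

Lemma cubic_no_two_decreasing_roots r r' : 0 < c3 -> r < r' ->
  cubic c3 c2 c1 c0 r = 0 -> cubic c3 c2 c1 c0 r' = 0 ->
  cubic_deriv c3 c2 c1 r < 0 -> cubic_deriv c3 c2 c1 r' < 0 -> False.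
Proof.
  intros Hc Hrr' Hr Hr' Dr Dr'.
  assert (Hq : cubic_quot r r' = 0).
  { pose proof (cubic_sub r r') as E. rewrite Hr, Hr' in E.
    destruct (Rmult_integral (r' - r) (cubic_quot r r')) as [h | h]; lra. }
  unfold cubic_quot, cubic_deriv in *.
  assert (0 < (r' - r) * (c3 * (2 * r + r') + c2)) by nra.
  assert ((r' - r) * (c3 * (2 * r' + r) + c2) < 0) by nra.
  assert (0 < c3 * ((r' - r) * (r' - r))) by (apply Rmult_lt_0_compat; nra).
  nra.
Qed.

Lemma cubic_root_after_decreasing_root r m : r < m ->
  cubic c3 c2 c1 c0 r = 0 -> cubic_deriv c3 c2 c1 r < 0 -> 0 <= cubic c3 c2 c1 c0 m ->
  exists z, r < z <= m /\ cubic c3 c2 c1 c0 z = 0.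
Proof.
  intros Hrm Hr Dr Hm.
  rewrite <- cubic_quot_diag in Dr.
  assert (Qm : 0 <= cubic_quot r m).
  { pose proof (cubic_sub r m) as E. rewrite Hr in E. nra. }
  destruct (IVT_cor (cubic_quot r) r m) as [z [Hz Qz]].
  - unfold cubic_quot; reg.
  - lra.
  - nra.
  - exists z. pose proof (cubic_sub r z) as E. rewrite Hr, Qz in E.
    destruct (Req_dec z r) as [->|]; split; lra.
Qed.

End Cubic.

Lemma Rinv_lt_iff x y : 0 < x -> 0 < y -> (/ y < / x <-> x < y).
Proof.
  intros Hx Hy. split; intros h.
  - rewrite <- (Rinv_inv x), <- (Rinv_inv y).
    apply Rinv_0_lt_contravar; [apply Rinv_0_lt_compat |]; auto.
  - apply Rinv_0_lt_contravar; lra.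
Qed.

Lemma div_le_compat_l x y z : 0 <= x -> 0 < z -> z <= y -> x / y <= x / z.
Proof. intros. unfold Rdiv. apply Rmult_le_compat_l; auto. apply Rinv_le_contravar; auto. Qed.

Lemma inv_ge_1 x : 0 < x <= 1 -> 1 <= / x.
Proof. intros Hx. rewrite <- Rinv_1. apply Rinv_le_contravar; lra. Qed.

Lemma scaled_neg_iff c d x y : 0 < c -> 0 < d -> c * x = d * y -> (x < 0 <-> y < 0).
Proof. intros Hc Hd E. split; intros H; nra. Qed.

Lemma threshold_pair_iff x y k1 k2 : 0 < x <= y -> 0 < k1 <= 1 -> 0 < k2 ->
  ((x < 1 /\ y < x + k1 * (1 - x)) /\ (y < 1 /\ x < y + k2 * (1 - y)) <-> y < x + k1 * (1 - x)).
Proof.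
  intros Hxy Hk1 Hk2. split; [tauto |]. intros H.
  assert (Hx : x < 1) by nra.
  assert (Hy : y < 1) by nra.
  assert (0 < k2 * (1 - y)) by (apply Rmult_lt_0_compat; lra).
  repeat split; lra.
Qed.

(** * The reduced steady-state problem *)

(* At a steady state with susceptible fraction [S], [rec_i S] is the compartment [R_i] and
   [lam_i S] the force of infection [beta_i (I_i + J_i)] divided by [mu]. *)
Section Reduced.
Variables a1 a2 G1 G2 s12 s21 : R.
Hypotheses (HG1 : 0 < G1 < 1) (HG2 : 0 < G2 < 1) (Hs12 : 0 < s12 <= 1) (Hs21 : 0 < s21 <= 1).

Definition rec1 (S : R) : R := (a2 - S) / s12.
Definition rec2 (S : R) : R := (a1 - S) / s21.
Definition det (S : R) : R := G1 * G2 * S ^ 2 - (a1 - S) * (a2 - S).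
Definition lam1_num (S : R) : R := rec1 S * (G2 * S + s12 * rec2 S).
Definition lam2_num (S : R) : R := rec2 S * (G1 * S + s21 * rec1 S).
Definition lam1 (S : R) : R := lam1_num S / det S.
Definition lam2 (S : R) : R := lam2_num S / det S.
Definition F (S : R) : R := (S - 1) * det S + S * (lam1_num S + lam2_num S).

Definition F3 : R := G1 * G2 - 1 + (1 - G2) / s12 + (1 - G1) / s21.
Definition F2 : R := a1 * (1 + (G1 - 1) / s21 - 1 / s12) + a2 * (1 + (G2 - 1) / s12 - 1 / s21)
  - (G1 * G2 - 1).
Definition F1 : R := (1 / s12 + 1 / s21 - 1) * a1 * a2 - (a1 + a2).

Definition reduced_eq (S u v : R) : Prop :=
  G1 * S * u = rec1 S * (s12 * v + 1) /\ G2 * S * v = rec2 S * (s21 * u + 1) /\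
  S * (1 + u + v) = 1.

Definition endemic_root (S : R) : Prop :=
  0 < S /\ S < a1 /\ S < a2 /\ 0 < det S /\ F S = 0.

Lemma rec1_scaled S : s12 * rec1 S = a2 - S.
Proof. unfold rec1; field; lra. Qed.

Lemma rec2_scaled S : s21 * rec2 S = a1 - S.
Proof. unfold rec2; field; lra. Qed.

Lemma F_cubic S : F S = cubic F3 F2 F1 (a1 * a2) S.
Proof. unfold F, cubic, F3, F2, F1, lam1_num, lam2_num, rec1, rec2, det; field; lra. Qed.

Lemma F_factor S : det S <> 0 -> F S = det S * (S * (1 + lam1 S + lam2 S) - 1).
Proof. intros HD; unfold F, lam1, lam2; field; exact HD. Qed.

Lemma lam_num_nonneg S : 0 <= S -> S <= a1 -> S <= a2 -> 0 <= lam1_num S /\ 0 <= lam2_num S.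
Proof.
  intros H0 H1 H2. unfold lam1_num, lam2_num.
  assert (0 <= rec1 S) by (pose proof (rec1_scaled S); nra).
  assert (0 <= rec2 S) by (pose proof (rec2_scaled S); nra).
  split; apply Rmult_le_pos; nra.
Qed.

Lemma lam_num_pos S : 0 < S -> S < a1 -> S < a2 -> 0 < lam1_num S /\ 0 < lam2_num S.
Proof.
  intros H0 H1 H2. unfold lam1_num, lam2_num.
  assert (0 < rec1 S) by (unfold rec1; apply Rdiv_lt_0_compat; lra).
  assert (0 < rec2 S) by (unfold rec2; apply Rdiv_lt_0_compat; lra).
  split; apply Rmult_lt_0_compat; nra.
Qed.

Lemma lam_system S : det S <> 0 ->
  G1 * S * lam1 S = rec1 S * (s12 * lam2 S + 1) /\ G2 * S * lam2 S = rec2 S * (s21 * lam1 S + 1).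
Proof.
  intros HD. unfold lam1, lam2, lam1_num, lam2_num.
  assert (ED : det S = G1 * G2 * S ^ 2 - (s12 * rec1 S) * (s21 * rec2 S))
    by (rewrite rec1_scaled, rec2_scaled; unfold det; ring).
  split; field_simplify_eq; auto; rewrite ED; ring.
Qed.

(* Cramer's rule for the linear system in [reduced_eq]. *)
Lemma det_mul_solution S u v :
  G1 * S * u = rec1 S * (s12 * v + 1) -> G2 * S * v = rec2 S * (s21 * u + 1) ->
  det S * u = lam1_num S /\ det S * v = lam2_num S.
Proof.
  intros E1 E2.
  assert (ED : det S = G1 * G2 * S ^ 2 - (s12 * rec1 S) * (s21 * rec2 S))
    by (rewrite rec1_scaled, rec2_scaled; unfold det; ring).
  unfold lam1_num, lam2_num. rewrite ED. split.
  - replace ((G1 * G2 * S ^ 2 - s12 * rec1 S * (s21 * rec2 S)) * u)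
      with (G2 * S * (G1 * S * u) - s12 * rec1 S * (s21 * rec2 S * u)) by ring.
    assert (s21 * rec2 S * u = G2 * S * v - rec2 S) by (rewrite E2; ring).
    rewrite E1, H. ring.
  - replace ((G1 * G2 * S ^ 2 - s12 * rec1 S * (s21 * rec2 S)) * v)
      with (G1 * S * (G2 * S * v) - s21 * rec2 S * (s12 * rec1 S * v)) by ring.
    assert (s12 * rec1 S * v = G1 * S * u - rec1 S) by (rewrite E1; ring).
    rewrite E2, H. ring.
Qed.

Lemma endemic_root_reduced_eq S :
  endemic_root S -> reduced_eq S (lam1 S) (lam2 S) /\ 0 < lam1 S /\ 0 < lam2 S.
Proof.
  intros (H0 & H1 & H2 & HD & HF).
  destruct (lam_num_pos S H0 H1 H2) as [N1 N2].
  destruct (lam_system S ltac:(lra)) as [E1 E2].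
  rewrite F_factor in HF by lra.
  destruct (Rmult_integral _ _ HF) as [h | h]; [lra |].
  unfold reduced_eq, lam1, lam2 in *.
  repeat split; try lra; apply Rdiv_lt_0_compat; lra.
Qed.

Lemma reduced_eq_endemic_root S u v : 0 <= S -> 0 < u -> 0 < v ->
  reduced_eq S u v -> endemic_root S /\ u = lam1 S /\ v = lam2 S.
Proof.
  intros HS Hu Hv (E1 & E2 & E3).
  assert (H0 : 0 < S) by (destruct HS as [h | <-]; lra).
  assert (Q1 : 0 < G1 * S * u) by (repeat apply Rmult_lt_0_compat; lra).
  assert (Q2 : 0 < G2 * S * v) by (repeat apply Rmult_lt_0_compat; lra).
  assert (P1 : 0 < rec1 S).
  { apply (Rmult_lt_reg_r (s12 * v + 1)); [nra | lra]. }
  assert (P2 : 0 < rec2 S).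
  { apply (Rmult_lt_reg_r (s21 * u + 1)); [nra | lra]. }
  pose proof (rec1_scaled S) as Er1. pose proof (rec2_scaled S) as Er2.
  assert (H1 : S < a1) by nra. assert (H2 : S < a2) by nra.
  destruct (lam_num_pos S H0 H1 H2) as [N1 N2].
  destruct (det_mul_solution S u v E1 E2) as [D1 D2].
  assert (HD : 0 < det S) by nra.
  assert (Eu : u = lam1 S) by (unfold lam1; rewrite <- D1; field; lra).
  assert (Ev : v = lam2 S) by (unfold lam2; rewrite <- D2; field; lra).
  repeat split; auto.
  rewrite F_factor, <- Eu, <- Ev, E3 by lra. ring.
Qed.

Lemma reduced_eq_infected S u v : reduced_eq S u v ->
  u * S * (G1 * S + (a2 - S)) = (a2 - S) * (S + s12 * (1 - S)) / s12 /\
  v * S * (G2 * S + (a1 - S)) = (a1 - S) * (S + s21 * (1 - S)) / s21.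
Proof.
  intros (E1 & E2 & E3).
  assert (Eu : S * u = 1 - S - S * v) by lra.
  assert (Ev : S * v = 1 - S - S * u) by lra.
  split.
  - transitivity (S * (G1 * S * u) + s12 * rec1 S * (u * S)); [rewrite rec1_scaled; ring |].
    rewrite E1. transitivity (rec1 S * (s12 * (S * v) + S + s12 * u * S)); [ring |].
    rewrite Ev. unfold rec1. field. lra.
  - transitivity (S * (G2 * S * v) + s21 * rec2 S * (v * S)); [rewrite rec2_scaled; ring |].
    rewrite E2. transitivity (rec2 S * (s21 * (S * u) + S + s21 * v * S)); [ring |].
    rewrite Eu. unfold rec2. field. lra.
Qed.

(* [lam_decay S] equals [- det S * (lam1 + lam2)'(S)]. *)
Definition lam_decay (S : R) : R :=
  G2 * S * (G1 * lam1 S + lam2 S + / s12) + (a2 - S) * (G2 * lam2 S + lam1 S + / s21)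
  + G1 * S * (G2 * lam2 S + lam1 S + / s21) + (a1 - S) * (G1 * lam1 S + lam2 S + / s12).

Lemma lam_decay_ge S : 0 < S -> S <= a1 -> S <= a2 -> 0 <= lam1 S -> 0 <= lam2 S ->
  G1 * G2 * S * (lam1 S + lam2 S + 2) <= lam_decay S.
Proof.
  unfold lam_decay. generalize (lam1 S) (lam2 S). intros u v H0 H1 H2 Hu Hv.
  pose proof (inv_ge_1 s12 Hs12). pose proof (inv_ge_1 s21 Hs21).
  assert (G1 * G2 * S <= G2 * S * / s12).
  { replace (G1 * G2 * S) with (G2 * S * G1) by ring. apply Rmult_le_compat_l; nra. }
  assert (G1 * G2 * S <= G1 * S * / s21).
  { replace (G1 * G2 * S) with (G1 * S * G2) by ring. apply Rmult_le_compat_l; nra. }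
  assert (0 <= G2 * S * v) by (apply Rmult_le_pos; nra).
  assert (0 <= G1 * S * u) by (apply Rmult_le_pos; nra).
  assert (0 <= (a2 - S) * (G2 * v + u + / s21)) by (apply Rmult_le_pos; nra).
  assert (0 <= (a1 - S) * (G1 * u + v + / s12)) by (apply Rmult_le_pos; nra).
  lra.
Qed.

(* The product rule for [F = det * (S * (1 + lam1 + lam2) - 1)]. *)
Lemma cubic_deriv_F S : det S <> 0 ->
  cubic_deriv F3 F2 F1 S = (2 * G1 * G2 * S + (a1 - S) + (a2 - S)) * (S * (1 + lam1 S + lam2 S) - 1)
    + det S * (1 + lam1 S + lam2 S) - S * lam_decay S.
Proof.
  intros HD. unfold cubic_deriv, F3, F2, F1, lam_decay, lam1, lam2, lam1_num, lam2_num, rec1, rec2.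
  unfold det in *. field. lra.
Qed.

Lemma F_deriv_neg S : 0 < S -> S <= a1 -> S <= a2 -> 0 < det S -> F S = 0 ->
  cubic_deriv F3 F2 F1 S < 0.
Proof.
  intros H0 H1 H2 HD HF.
  assert (Hroot : S * (1 + lam1 S + lam2 S) = 1).
  { rewrite F_factor in HF by lra. destruct (Rmult_integral _ _ HF); lra. }
  destruct (lam_num_nonneg S ltac:(lra) H1 H2) as [N1 N2].
  assert (Hu : 0 <= lam1 S) by (unfold lam1; apply Rmult_le_pos; [lra | left; apply Rinv_0_lt_compat; lra]).
  assert (Hv : 0 <= lam2 S) by (unfold lam2; apply Rmult_le_pos; [lra | left; apply Rinv_0_lt_compat; lra]).
  pose proof (lam_decay_ge S H0 H1 H2 Hu Hv) as HP.
  assert (HSD : S * cubic_deriv F3 F2 F1 S = det S - S ^ 2 * lam_decay S).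
  { rewrite cubic_deriv_F by lra.
    transitivity ((2 * G1 * G2 * S + (a1 - S) + (a2 - S)) * S * (S * (1 + lam1 S + lam2 S) - 1)
      + det S * (S * (1 + lam1 S + lam2 S)) - S ^ 2 * lam_decay S); [ring |].
    rewrite Hroot. ring. }
  (* [S^2 * lam_decay S >= G1 G2 S^2 (S (1 + lam1 + lam2) + S) = G1 G2 S^2 (1 + S)] *)
  assert (HSP : G1 * G2 * S ^ 2 * (1 + S) <= S ^ 2 * lam_decay S).
  { replace (G1 * G2 * S ^ 2 * (1 + S)) with (S ^ 2 * (G1 * G2 * S * (lam1 S + lam2 S + 2)))
      by (rewrite <- Hroot at 1; ring).
    apply Rmult_le_compat_l; [nra | exact HP]. }
  unfold det in HSD.
  assert (0 <= (a1 - S) * (a2 - S)) by nra.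
  assert (0 < G1 * G2 * S ^ 3) by (apply Rmult_lt_0_compat; [nra | apply pow_lt; lra]).
  nra.
Qed.

Lemma F3_pos : 0 < F3.
Proof.
  unfold F3.
  assert (1 - G2 <= (1 - G2) / s12).
  { unfold Rdiv. rewrite <- (Rmult_1_r (1 - G2)) at 1.
    apply Rmult_le_compat_l; [lra | apply inv_ge_1; lra]. }
  assert (1 - G1 <= (1 - G1) / s21).
  { unfold Rdiv. rewrite <- (Rmult_1_r (1 - G1)) at 1.
    apply Rmult_le_compat_l; [lra | apply inv_ge_1; lra]. }
  nra.
Qed.

Lemma det_le r r' : 0 <= r -> r <= r' -> r' <= a1 -> r' <= a2 -> det r <= det r'.
Proof.
  intros H0 H1 H2 H3.
  assert (0 <= G1 * G2 * (r + r')) by (apply Rmult_le_pos; nra).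
  assert (0 <= (r' - r) * ((G1 * G2 - 1) * (r + r') + a1 + a2)) by (apply Rmult_le_pos; lra).
  unfold det. nra.
Qed.

Lemma endemic_root_unique r r' : endemic_root r -> endemic_root r' -> r = r'.
Proof.
  intros (H0 & H1 & H2 & HD & HF) (H0' & H1' & H2' & HD' & HF').
  pose proof (F_deriv_neg r H0 ltac:(lra) ltac:(lra) HD HF).
  pose proof (F_deriv_neg r' H0' ltac:(lra) ltac:(lra) HD' HF').
  rewrite F_cubic in HF, HF'.
  destruct (Rtotal_order r r') as [h | [h | h]]; auto; exfalso.
  - exact (cubic_no_two_decreasing_roots _ _ _ _ r r' F3_pos h HF HF' H H3).
  - exact (cubic_no_two_decreasing_roots _ _ _ _ r' r F3_pos h HF' HF H3 H).
Qed.

Lemma endemic_root_exists : 0 < a1 -> 0 < a2 -> Rmin a1 a2 <= 1 -> F (Rmin a1 a2) < 0 ->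
  exists r, endemic_root r.
Proof.
  intros Ha1 Ha2 Hm1 Hm.
  assert (Hm0 : 0 < Rmin a1 a2) by (apply Rmin_glb_lt; lra).
  pose proof (Rmin_l a1 a2) as Hma1. pose proof (Rmin_r a1 a2) as Hma2.
  set (m := Rmin a1 a2) in *.
  assert (F0 : 0 < F 0) by (unfold F, det; nra).
  rewrite F_cubic in F0, Hm.
  destruct (IVT_cor (cubic F3 F2 F1 (a1 * a2)) 0 m) as [z [Hz Fz]].
  - apply cubic_continuous.
  - lra.
  - left; apply Rmult_pos_neg; assumption.
  - assert (Hz0 : 0 < z) by (destruct (Req_dec z 0) as [-> | ]; lra).
    assert (Hzm : z < m) by (destruct (Req_dec z m) as [-> | ]; lra).
    rewrite <- F_cubic in Fz.
    exists z. repeat split; try lra.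
    destruct (lam_num_pos z Hz0 ltac:(lra) ltac:(lra)) as [N1 N2].
    (* [F z = (z - 1) det z + z (lam1_num + lam2_num)] is positive unless [det z > 0] *)
    destruct (Rlt_le_dec 0 (det z)) as [h | h]; auto.
    unfold F in Fz. nra.
Qed.

Lemma endemic_root_absent r : 0 <= F (Rmin a1 a2) -> ~ endemic_root r.
Proof.
  intros Hm (H0 & H1 & H2 & HD & HF).
  assert (Hrm : r < Rmin a1 a2) by (apply Rmin_glb_lt; lra).
  pose proof (Rmin_l a1 a2). pose proof (Rmin_r a1 a2).
  pose proof (F_deriv_neg r H0 ltac:(lra) ltac:(lra) HD HF) as Dr.
  rewrite F_cubic in HF, Hm.
  destruct (cubic_root_after_decreasing_root _ _ _ _ r (Rmin a1 a2) Hrm HF Dr Hm) as [z [Hz Fz]].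
  assert (HDz : 0 < det z) by (pose proof (det_le r z); lra).
  assert (Dz : cubic_deriv F3 F2 F1 z < 0).
  { apply F_deriv_neg; try lra. rewrite F_cubic; exact Fz. }
  exact (cubic_no_two_decreasing_roots _ _ _ _ r z F3_pos ltac:(lra) HF Fz Dr Dz).
Qed.

Lemma F_at_a1 : s12 * F a1 = G2 * a1 ^ 2 * (a2 - a1 - s12 * G1 * (1 - a1)).
Proof. unfold F, det, lam1_num, lam2_num, rec1, rec2. field. lra. Qed.

Lemma F_at_a2 : s21 * F a2 = G1 * a2 ^ 2 * (a1 - a2 - s21 * G2 * (1 - a2)).
Proof. unfold F, det, lam1_num, lam2_num, rec1, rec2. field. lra. Qed.

Lemma F_min_neg_iff : 0 < a1 -> 0 < a2 ->
  (F (Rmin a1 a2) < 0 <->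
   (a1 < 1 /\ a2 < a1 + s12 * G1 * (1 - a1)) /\ (a2 < 1 /\ a1 < a2 + s21 * G2 * (1 - a2))).
Proof.
  intros Ha1 Ha2.
  assert (0 < s12 * G1 <= 1) by (split; nra).
  assert (0 < s21 * G2 <= 1) by (split; nra).
  unfold Rmin. destruct (Rle_dec a1 a2) as [h | h].
  - assert (0 < G2 * a1 ^ 2) by (apply Rmult_lt_0_compat; [lra | apply pow_lt; lra]).
    rewrite (scaled_neg_iff s12 (G2 * a1 ^ 2) _ _ ltac:(lra) ltac:(lra) F_at_a1).
    rewrite (threshold_pair_iff a1 a2 (s12 * G1) (s21 * G2)) by lra.
    split; intros; lra.
  - assert (0 < G1 * a2 ^ 2) by (apply Rmult_lt_0_compat; [lra | apply pow_lt; lra]).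
    rewrite (scaled_neg_iff s21 (G1 * a2 ^ 2) _ _ ltac:(lra) ltac:(lra) F_at_a2).
    pose proof (threshold_pair_iff a2 a1 (s21 * G2) (s12 * G1) ltac:(lra) ltac:(lra) ltac:(lra)).
    assert (a1 - a2 - s21 * G2 * (1 - a2) < 0 <-> a1 < a2 + s21 * G2 * (1 - a2))
      by (split; intros; lra).
    tauto.
Qed.

End Reduced.

(** * The limit [mu -> 0] *)

Lemma ps_recip_eq a1 a2 s12 s21 S : a1 <> 0 -> a2 <> 0 -> s12 <> 0 -> s21 <> 0 ->
  ps s12 s21 (/ a1) (/ a2) S = - (s12 * s21 / (a1 * a2)) * F a1 a2 1 1 s12 s21 S.
Proof.
  intros. unfold ps, F, det, lam1_num, lam2_num, rec1, rec2; cbv zeta. field. tauto.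
Qed.

Lemma F_perturbation a1 a2 G1 G2 s12 s21 S :
  0 < a1 <= 1 -> 0 < a2 <= 1 -> 0 < G1 <= 1 -> 0 < G2 <= 1 ->
  0 < s12 <= 1 -> 0 < s21 <= 1 -> 0 <= S <= 1 ->
  Rabs (F a1 a2 G1 G2 s12 s21 S - F a1 a2 1 1 s12 s21 S) <= 2 * ((1 - G1) / s21 + (1 - G2) / s12).
Proof.
  intros Ha1 Ha2 HG1 HG2 Hs12 Hs21 HS.
  set (q1 := (1 - G1) / s21). set (q2 := (1 - G2) / s12).
  assert (Eq1 : s21 * q1 = 1 - G1) by (unfold q1; field; lra).
  assert (Eq2 : s12 * q2 = 1 - G2) by (unfold q2; field; lra).
  assert (Hq1 : 1 - G1 <= q1) by nra. assert (Hq2 : 1 - G2 <= q2) by nra.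
  assert (E : F a1 a2 G1 G2 s12 s21 S - F a1 a2 1 1 s12 s21 S
            = (q1 + q2 - (1 - G1 * G2)) * S ^ 3 + ((1 - G1 * G2) - a1 * q1 - a2 * q2) * S ^ 2).
  { unfold q1, q2, F, det, lam1_num, lam2_num, rec1, rec2. field. lra. }
  rewrite E. apply Rabs_le.
  assert (0 <= 1 - G1 * G2 <= q1 + q2) by nra.
  assert (0 <= a1 * q1 <= q1) by nra. assert (0 <= a2 * q2 <= q2) by nra.
  assert (0 <= S ^ 3 <= 1) by (split; nra). assert (0 <= S ^ 2 <= 1) by (split; nra).
  split; nra.
Qed.

Lemma ps_root_dist R1 R2 s12 s21 s0 S : 0 < s12 <= 1 -> 0 < s21 <= 1 -> 1 < R1 -> 1 < R2 ->
  0 < s0 -> ps s12 s21 R1 R2 s0 = 0 -> 0 <= S ->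
  s0 < 1 /\ s12 * s21 * Rabs (S - s0) <= Rabs (ps s12 s21 R1 R2 S).
Proof.
  intros Hs12 Hs21 HR1 HR2 Hs0 Hroot HS. unfold ps in *; cbv zeta in *.
  set (A := s12 * (1 - s21) * R1 + s21 * (1 - s12) * R2) in *.
  set (B := s12 * s21 * (R1 + R2) - (s12 + s21 - s12 * s21)) in *.
  assert (HA : 0 <= A) by (unfold A; assert (0 <= s12 * (1 - s21)) by nra;
                           assert (0 <= s21 * (1 - s12)) by nra; nra).
  assert (Hk : 0 < s12 * s21) by nra.
  set (T := A * s0 + B).
  assert (HT : s0 * T = s12 * s21) by (unfold T; lra).
  assert (HTp : 0 < T) by nra.
  assert (Hs01 : s0 < 1).
  { assert (E : A + B - s12 * s21 = (1 - s0) * (A * (1 + s0) + B))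
      by (transitivity (A + B - s12 * s21 - (A * s0 ^ 2 + B * s0 + - (s12 * s21))); [lra | ring]).
    assert (E1 : A + B - s12 * s21 = s12 * (R1 - 1) + s21 * (R2 - 1)) by (unfold A, B; ring).
    assert (0 < s12 * (R1 - 1)) by (apply Rmult_lt_0_compat; lra).
    assert (0 < s21 * (R2 - 1)) by (apply Rmult_lt_0_compat; lra).
    assert (0 < A * (1 + s0) + B) by (unfold T in HTp; lra).
    assert (0 < 1 - s0) by (apply (Rmult_lt_reg_r (A * (1 + s0) + B)); lra).
    lra. }
  split; auto.
  assert (E : A * S ^ 2 + B * S + - (s12 * s21) = (S - s0) * (A * S + T))
    by (transitivity (A * S ^ 2 + B * S + - (s12 * s21) - (A * s0 ^ 2 + B * s0 + - (s12 * s21)));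
        [lra | unfold T; ring]).
  rewrite E, Rabs_mult, (Rabs_right (A * S + T)) by nra.
  rewrite Rmult_comm. apply Rmult_le_compat_l; [apply Rabs_pos | nra].
Qed.

Definition infected_ratio (g s a mu S : R) : R :=
  (a - S) * (S + s * (1 - S)) / (s * ((g + mu) * a - mu * S)).

Lemma coef_b1_ratio g s a s0 : 0 < g -> 0 < s -> 0 < a ->
  coef_b1 g s (/ a) s0 = infected_ratio g s a 0 s0.
Proof. intros. unfold coef_b1, infected_ratio. field. lra. Qed.

Lemma infected_ratio_lipschitz g s a mu S s0 : 0 < g -> 0 < s <= 1 -> 0 <= mu ->
  0 < a <= 1 -> 0 <= S <= a -> 0 < s0 < 1 ->
  Rabs (infected_ratio g s a mu S - infected_ratio g s a 0 s0)
  <= (g * Rabs (S - s0) + mu) / (s * (g * a) ^ 2).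
Proof.
  intros Hg Hs Hmu Ha HS Hs0.
  set (D := (g + mu) * a - mu * S).
  assert (Hga : 0 < g * a) by nra.
  assert (HD : g * a <= D) by (unfold D; nra).
  set (W := s - (1 - s) * (a - S - s0)).
  set (V := (a - S) * (a - s0) * (s0 + s * (1 - s0))).
  assert (E : infected_ratio g s a mu S - infected_ratio g s a 0 s0
              = (g * a * (s0 - S) * W - mu * V) * / (s * (g * a) * D)).
  { unfold infected_ratio, W, V, D. field. repeat split; nra. }
  assert (HW : Rabs W <= 1) by (apply Rabs_le; unfold W; split; nra).
  assert (HV : Rabs V <= 1).
  { apply Rabs_le. unfold V.
    assert (0 <= s0 + s * (1 - s0) <= 1) by nra.
    assert (-1 <= (a - S) * (a - s0) <= 1) by nra.
    split; nra. }
  assert (Hnum : Rabs (g * a * (s0 - S) * W - mu * V) <= g * Rabs (S - s0) + mu).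
  { unfold Rminus at 1. eapply Rle_trans; [apply Rabs_triang |].
    rewrite Rabs_Ropp, !Rabs_mult, Rabs_minus_sym, (Rabs_pos_eq g), (Rabs_pos_eq a), (Rabs_pos_eq mu) by lra.
    pose proof (Rabs_pos (S - s0)). pose proof (Rabs_pos W). pose proof (Rabs_pos V).
    assert (g * a * Rabs (S - s0) * Rabs W <= g * Rabs (S - s0)).
    { assert (0 <= g * Rabs (S - s0) * (1 - a)) by (apply Rmult_le_pos; [apply Rmult_le_pos |]; lra).
      apply Rle_trans with (g * a * Rabs (S - s0)); [| lra].
      rewrite <- (Rmult_1_r (g * a * Rabs (S - s0))) at 2.
      apply Rmult_le_compat_l; [nra | lra]. }
    assert (mu * Rabs V <= mu) by nra.
    lra. }
  assert (Hden : 0 < s * (g * a) * (g * a)) by (repeat apply Rmult_lt_0_compat; lra).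
  rewrite E, Rabs_mult, Rabs_inv, (Rabs_pos_eq (s * (g * a) * D)) by (apply Rmult_le_pos; nra).
  replace (s * (g * a) ^ 2) with (s * (g * a) * (g * a)) by ring.
  unfold Rdiv. apply Rmult_le_compat; [apply Rabs_pos | left; apply Rinv_0_lt_compat; nra | exact Hnum |].
  apply Rinv_le_contravar; [exact Hden |].
  apply Rmult_le_compat_l; nra.
Qed.

Lemma infected_ratio_close g s a l mu S s0 C : 0 < g -> 0 < s <= 1 -> 0 < mu ->
  0 < l <= a -> a <= 1 -> 0 <= S <= a -> 0 < s0 < 1 -> 0 <= C -> Rabs (S - s0) <= C * mu ->
  Rabs (mu * infected_ratio g s a mu S - mu * infected_ratio g s a 0 s0)
  <= (g * C + 1) / (s * (g * l) ^ 2) * mu ^ 2.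
Proof.
  intros Hg Hs Hmu Hl Ha HS Hs0 HC HSs0.
  rewrite <- Rmult_minus_distr_l, Rabs_mult, (Rabs_pos_eq mu) by lra.
  replace ((g * C + 1) / (s * (g * l) ^ 2) * mu ^ 2) with (mu * ((g * (C * mu) + mu) / (s * (g * l) ^ 2)))
    by (field; split; nra).
  apply Rmult_le_compat_l; [lra |].
  eapply Rle_trans; [apply infected_ratio_lipschitz; auto; lra |].
  assert (Hgl : 0 < s * (g * l) ^ 2) by (apply Rmult_lt_0_compat; [lra | apply pow_lt; nra]).
  assert (Hga : 0 < s * (g * a) ^ 2) by (apply Rmult_lt_0_compat; [lra | apply pow_lt; nra]).
  unfold Rdiv. apply Rmult_le_compat; [| left; apply Rinv_0_lt_compat; exact Hga | |].
  - pose proof (Rabs_pos (S - s0)). nra.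
  - apply Rplus_le_compat_r, Rmult_le_compat_l; lra.
  - apply Rinv_le_contravar; [exact Hgl |].
    apply Rmult_le_compat_l; [lra |]. apply pow_incr. split; nra.
Qed.

(** * Steady states of (M) *)

Lemma steady_state_total b1 b2 g1 g2 s12 s21 mu x : 0 < mu ->
  steady_state b1 b2 g1 g2 s12 s21 mu x ->
  sS x + sI1 x + sI2 x + sJ1 x + sJ2 x + sR1 x + sR2 x + sR3 x = 1.
Proof.
  intros Hmu (e1 & e2 & e3 & e4 & e5 & e6 & e7 & e8).
  apply (Rmult_eq_reg_l mu); lra.
Qed.

Lemma Omega_i_recip gi sij mu ai aj : 0 < gi -> 0 < mu -> 0 < sij -> 0 < ai -> 0 < aj ->
  (Omega_i gi sij mu (/ ai) (/ aj) <-> ai < 1 /\ aj < ai + sij * (gi / (gi + mu)) * (1 - ai)).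
Proof.
  intros Hg Hmu Hs Hai Haj. unfold Omega_i, Rgt.
  rewrite <- Rinv_1 at 1. rewrite Rinv_lt_iff by lra.
  assert (HG : 0 < gi / (gi + mu)) by (apply Rdiv_lt_0_compat; lra).
  set (K := ai + sij * (gi / (gi + mu)) * (1 - ai)).
  assert (Hfrac : 0 < K -> (gi + mu) * / ai / ((1 + sij * (/ ai - 1)) * gi + mu) = / K).
  { intros HK. assert (0 < (gi + mu) * K) by (apply Rmult_lt_0_compat; lra).
    unfold K at 1. field. repeat split; try lra.
    replace (ai * (gi + mu) + sij * gi * (1 - ai)) with ((gi + mu) * K) by (unfold K; field; lra).
    lra. }
  assert (HK : ai < 1 -> 0 < K).
  { intros h. assert (0 < sij * (gi / (gi + mu)) * (1 - ai))
      by (apply Rmult_lt_0_compat; [apply Rmult_lt_0_compat |]; lra).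
    unfold K; lra. }
  split; intros [h1 h2]; split; auto; rewrite Hfrac in * by auto.
  - apply Rinv_lt_iff; auto.
  - apply Rinv_lt_iff; auto.
Qed.

Section Model.
Variables b1 b2 g1 g2 s12 s21 mu : R.
Hypotheses (Hb1 : 0 < b1) (Hb2 : 0 < b2) (Hg1 : 0 < g1) (Hg2 : 0 < g2) (Hmu : 0 < mu)
  (Hs12 : 0 < s12 <= 1) (Hs21 : 0 < s21 <= 1).

Local Notation a1 := ((g1 + mu) / b1).
Local Notation a2 := ((g2 + mu) / b2).
Local Notation G1 := (g1 / (g1 + mu)).
Local Notation G2 := (g2 / (g2 + mu)).

Lemma a1_pos : 0 < a1.
Proof. apply Rdiv_lt_0_compat; lra. Qed.

Lemma a2_pos : 0 < a2.
Proof. apply Rdiv_lt_0_compat; lra. Qed.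

Lemma a1_lower : 0 < g1 / b1 <= a1.
Proof.
  split; [apply Rdiv_lt_0_compat; lra |].
  apply Rmult_le_compat_r; [left; apply Rinv_0_lt_compat |]; lra.
Qed.

Lemma a2_lower : 0 < g2 / b2 <= a2.
Proof.
  split; [apply Rdiv_lt_0_compat; lra |].
  apply Rmult_le_compat_r; [left; apply Rinv_0_lt_compat |]; lra.
Qed.

Lemma G1_bounds : 0 < G1 < 1.
Proof.
  assert (0 < mu / (g1 + mu)) by (apply Rdiv_lt_0_compat; lra).
  assert (0 < g1 / (g1 + mu)) by (apply Rdiv_lt_0_compat; lra).
  assert (g1 / (g1 + mu) + mu / (g1 + mu) = 1) by (field; lra).
  split; lra.
Qed.

Lemma G2_bounds : 0 < G2 < 1.
Proof.
  assert (0 < mu / (g2 + mu)) by (apply Rdiv_lt_0_compat; lra).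
  assert (0 < g2 / (g2 + mu)) by (apply Rdiv_lt_0_compat; lra).
  assert (g2 / (g2 + mu) + mu / (g2 + mu) = 1) by (field; lra).
  split; lra.
Qed.

Lemma repr_num_recip1 : repr_num b1 g1 mu = / a1.
Proof. unfold repr_num. field. lra. Qed.

Lemma repr_num_recip2 : repr_num b2 g2 mu = / a2.
Proof. unfold repr_num. field. lra. Qed.

(* [u] and [v] are the forces of infection [beta_i (I_i + J_i)] divided by [mu]. *)
Definition state_of (S u v : R) : state :=
  let J1 := mu * u * (a1 - S) / (g1 + mu) in
  let J2 := mu * v * (a2 - S) / (g2 + mu) in
  mkState S (mu * u * S / (g1 + mu)) (mu * v * S / (g2 + mu)) J1 J2
    (rec1 a2 s12 S) (rec2 a1 s21 S) ((g1 * J1 + g2 * J2) / mu).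

Lemma state_of_steady S u v : reduced_eq a1 a2 G1 G2 s12 s21 S u v ->
  steady_state b1 b2 g1 g2 s12 s21 mu (state_of S u v).
Proof.
  intros (E1 & E2 & E3). unfold steady_state, state_of, rec1, rec2 in *; cbn.
  repeat split.
  - transitivity (mu * (1 - S * (1 + u + v))); [field; lra | rewrite E3; ring].
  - field; lra.
  - field; lra.
  - field; lra.
  - field; lra.
  - transitivity (mu * (G1 * S * u - (a2 - S) / s12 * (s12 * v + 1))); [field; lra | rewrite E1; ring].
  - transitivity (mu * (G2 * S * v - (a1 - S) / s21 * (s21 * u + 1))); [field; lra | rewrite E2; ring].
  - field; lra.
Qed.

Lemma state_of_feasible S u v : 0 <= S -> S <= a1 -> S <= a2 -> 0 <= u -> 0 <= v ->
  reduced_eq a1 a2 G1 G2 s12 s21 S u v -> feasible (state_of S u v).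
Proof.
  intros H0 H1 H2 Hu Hv HE.
  pose proof (steady_state_total _ _ _ _ _ _ _ _ Hmu (state_of_steady S u v HE)) as Htot.
  unfold feasible, state_of, rec1, rec2 in *; cbn in *.
  assert (0 <= mu * u * (a1 - S) / (g1 + mu))
    by (apply Rle_mult_inv_pos; [repeat apply Rmult_le_pos |]; lra).
  assert (0 <= mu * v * (a2 - S) / (g2 + mu))
    by (apply Rle_mult_inv_pos; [repeat apply Rmult_le_pos |]; lra).
  repeat split; auto;
    try (apply Rle_mult_inv_pos; [repeat apply Rmult_le_pos |]; lra).
  apply Rle_mult_inv_pos; [| lra].
  assert (0 <= g1 * (mu * u * (a1 - S) / (g1 + mu))) by (apply Rmult_le_pos; lra).
  assert (0 <= g2 * (mu * v * (a2 - S) / (g2 + mu))) by (apply Rmult_le_pos; lra).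
  lra.
Qed.

Lemma steady_state_coords y : steady_state b1 b2 g1 g2 s12 s21 mu y -> feasible y ->
  0 < sI1 y -> 0 < sI2 y ->
  let u := b1 * (sI1 y + sJ1 y) / mu in
  let v := b2 * (sI2 y + sJ2 y) / mu in
  y = state_of (sS y) u v /\ reduced_eq a1 a2 G1 G2 s12 s21 (sS y) u v /\ 0 < u /\ 0 < v.
Proof.
  destruct y as [S I1 I2 J1 J2 R1 R2 R3].
  intros Hst Hfe HI1 HI2 u v.
  unfold steady_state, feasible in *; cbn in *.
  destruct Hst as (e1 & e2 & e3 & e4 & e5 & e6 & e7 & e8).
  destruct Hfe as (f1 & f2 & f3 & f4 & f5 & f6 & f7 & f8 & _).
  assert (Hu : 0 < u) by (apply Rdiv_lt_0_compat; nra).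
  assert (Hv : 0 < v) by (apply Rdiv_lt_0_compat; nra).
  assert (Ea1 : S + s21 * R2 = a1).
  { apply (Rmult_eq_reg_l (b1 * (I1 + J1))); [| nra].
    replace (b1 * (I1 + J1) * a1) with ((g1 + mu) * (I1 + J1)) by (field; lra). lra. }
  assert (Ea2 : S + s12 * R1 = a2).
  { apply (Rmult_eq_reg_l (b2 * (I2 + J2))); [| nra].
    replace (b2 * (I2 + J2) * a2) with ((g2 + mu) * (I2 + J2)) by (field; lra). lra. }
  assert (EI1 : I1 = mu * u * S / (g1 + mu)) by (unfold u; field_simplify_eq; lra).
  assert (EI2 : I2 = mu * v * S / (g2 + mu)) by (unfold v; field_simplify_eq; lra).
  assert (EJ1 : J1 = mu * u * (a1 - S) / (g1 + mu))
    by (rewrite <- Ea1; unfold u; field_simplify_eq; lra).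
  assert (EJ2 : J2 = mu * v * (a2 - S) / (g2 + mu))
    by (rewrite <- Ea2; unfold v; field_simplify_eq; lra).
  assert (ER1 : R1 = rec1 a2 s12 S) by (unfold rec1; rewrite <- Ea2; field; lra).
  assert (ER2 : R2 = rec2 a1 s21 S) by (unfold rec2; rewrite <- Ea1; field; lra).
  assert (ER3 : R3 = (g1 * J1 + g2 * J2) / mu) by (field_simplify_eq; lra).
  split; [| split; [| split]]; auto.
  - unfold state_of; cbv zeta. rewrite <- EI1, <- EI2, <- EJ1, <- EJ2, <- ER1, <- ER2, <- ER3.
    reflexivity.
  - split; [| split]; apply (Rmult_eq_reg_l mu); try lra.
    + rewrite <- ER1. transitivity (g1 * I1); [rewrite EI1; field; lra |].
      unfold v. field_simplify_eq; lra.
    + rewrite <- ER2. transitivity (g2 * I2); [rewrite EI2; field; lra |].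
      unfold u. field_simplify_eq; lra.
    + unfold u, v. field_simplify_eq; lra.
Qed.

Definition endemic_state (S : R) : state :=
  state_of S (lam1 a1 a2 G1 G2 s12 s21 S) (lam2 a1 a2 G1 G2 s12 s21 S).

Lemma endemic_state_spec r : endemic_root a1 a2 G1 G2 s12 s21 r ->
  steady_state b1 b2 g1 g2 s12 s21 mu (endemic_state r) /\ feasible (endemic_state r) /\
  0 < sI1 (endemic_state r) /\ 0 < sI2 (endemic_state r).
Proof.
  intros Hr. pose proof Hr as (H0 & H1 & H2 & _).
  destruct (endemic_root_reduced_eq _ _ _ _ _ _ G1_bounds G2_bounds Hs12 Hs21 r Hr) as (HE & Hu & Hv).
  split; [| split]; [apply state_of_steady | apply state_of_feasible |]; auto; try lra.
  unfold endemic_state, state_of; cbn [sI1 sI2].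
  split; apply Rdiv_lt_0_compat; try (apply Rmult_lt_0_compat; [apply Rmult_lt_0_compat |]); lra.
Qed.

Lemma endemic_state_unique r y : endemic_root a1 a2 G1 G2 s12 s21 r ->
  steady_state b1 b2 g1 g2 s12 s21 mu y -> feasible y -> 0 < sI1 y -> 0 < sI2 y ->
  y = endemic_state r.
Proof.
  intros Hr Hst Hfe HI1 HI2.
  destruct (steady_state_coords y Hst Hfe HI1 HI2) as (Ey & HE & Hu & Hv).
  destruct (reduced_eq_endemic_root _ _ _ _ _ _ G1_bounds G2_bounds Hs12 Hs21 _ _ _
              (proj1 Hfe) Hu Hv HE) as (HS & Eu & Ev).
  rewrite Ey, Eu, Ev. unfold endemic_state.
  rewrite (endemic_root_unique _ _ _ _ _ _ G1_bounds G2_bounds Hs12 Hs21 _ _ HS Hr).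
  reflexivity.
Qed.

Lemma Omega_reduced_iff :
  Omega g1 g2 s12 s21 mu (repr_num b1 g1 mu) (repr_num b2 g2 mu) <->
  (a1 < 1 /\ a2 < a1 + s12 * G1 * (1 - a1)) /\ (a2 < 1 /\ a1 < a2 + s21 * G2 * (1 - a2)).
Proof.
  unfold Omega. rewrite repr_num_recip1, repr_num_recip2.
  rewrite (Omega_i_recip g1 s12 mu a1 a2), (Omega_i_recip g2 s21 mu a2 a1)
    by (auto using a1_pos, a2_pos; lra).
  tauto.
Qed.

Lemma Omega_iff_F_min_neg :
  Omega g1 g2 s12 s21 mu (repr_num b1 g1 mu) (repr_num b2 g2 mu) <->
  F a1 a2 G1 G2 s12 s21 (Rmin a1 a2) < 0.
Proof.
  rewrite Omega_reduced_iff, F_min_neg_iff by (auto using G1_bounds, G2_bounds, a1_pos, a2_pos).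
  tauto.
Qed.

Lemma Omega_recip_lt_1 :
  Omega g1 g2 s12 s21 mu (repr_num b1 g1 mu) (repr_num b2 g2 mu) -> a1 < 1 /\ a2 < 1.
Proof. rewrite Omega_reduced_iff. tauto. Qed.

Lemma endemic_root_of_Omega :
  Omega g1 g2 s12 s21 mu (repr_num b1 g1 mu) (repr_num b2 g2 mu) ->
  exists r, endemic_root a1 a2 G1 G2 s12 s21 r.
Proof.
  intros HO. destruct (Omega_recip_lt_1 HO) as [h1 h2].
  apply endemic_root_exists; auto using G1_bounds, G2_bounds, a1_pos, a2_pos.
  - pose proof (Rmin_l a1 a2). lra.
  - apply Omega_iff_F_min_neg; exact HO.
Qed.

Lemma no_endemic_state :
  ~ Omega g1 g2 s12 s21 mu (repr_num b1 g1 mu) (repr_num b2 g2 mu) ->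
  ~ exists y, steady_state b1 b2 g1 g2 s12 s21 mu y /\ feasible y /\ 0 < sI1 y /\ 0 < sI2 y.
Proof.
  intros HnO [y (Hst & Hfe & HI1 & HI2)].
  destruct (steady_state_coords y Hst Hfe HI1 HI2) as (_ & HE & Hu & Hv).
  destruct (reduced_eq_endemic_root _ _ _ _ _ _ G1_bounds G2_bounds Hs12 Hs21 _ _ _
              (proj1 Hfe) Hu Hv HE) as (HS & _ & _).
  apply (endemic_root_absent a1 a2 G1 G2 s12 s21 G1_bounds G2_bounds Hs12 Hs21 (sS y)); auto.
  destruct (Rlt_le_dec (F a1 a2 G1 G2 s12 s21 (Rmin a1 a2)) 0) as [h | h]; auto.
  exfalso. apply HnO, Omega_iff_F_min_neg, h.
Qed.

Definition S_error : R := 2 * (b1 * b2 / (g1 * g2)) * (/ (g1 * s21) + / (g2 * s12)).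

Definition endemic_error : R :=
  S_error + (g1 * S_error + 1) / (s12 * (g1 * (g2 / b2)) ^ 2)
  + (g2 * S_error + 1) / (s21 * (g2 * (g1 / b1)) ^ 2).

Lemma S_error_pos : 0 < S_error.
Proof.
  unfold S_error.
  assert (0 < / (g1 * s21)) by (apply Rinv_0_lt_compat; nra).
  assert (0 < / (g2 * s12)) by (apply Rinv_0_lt_compat; nra).
  assert (0 < b1 * b2 / (g1 * g2)) by (apply Rdiv_lt_0_compat; nra).
  apply Rmult_lt_0_compat; lra.
Qed.

Lemma endemic_error_ge :
  S_error <= endemic_error /\
  (g1 * S_error + 1) / (s12 * (g1 * (g2 / b2)) ^ 2) <= endemic_error /\
  (g2 * S_error + 1) / (s21 * (g2 * (g1 / b1)) ^ 2) <= endemic_error.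
Proof.
  pose proof S_error_pos.
  assert (0 < (g1 * S_error + 1) / (s12 * (g1 * (g2 / b2)) ^ 2)).
  { apply Rdiv_lt_0_compat; [nra |]. apply Rmult_lt_0_compat; [lra | apply pow_lt].
    apply Rmult_lt_0_compat; [lra | apply Rdiv_lt_0_compat; lra]. }
  assert (0 < (g2 * S_error + 1) / (s21 * (g2 * (g1 / b1)) ^ 2)).
  { apply Rdiv_lt_0_compat; [nra |]. apply Rmult_lt_0_compat; [lra | apply pow_lt].
    apply Rmult_lt_0_compat; [lra | apply Rdiv_lt_0_compat; lra]. }
  unfold endemic_error. repeat split; lra.
Qed.

Lemma endemic_error_pos : 0 < endemic_error.
Proof. pose proof S_error_pos. pose proof endemic_error_ge. lra. Qed.

Lemma F_perturbation_scaled_le : 2 * ((1 - G1) / s21 + (1 - G2) / s12) / (a1 * a2) <= S_error * mu.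
Proof.
  replace (2 * ((1 - G1) / s21 + (1 - G2) / s12) / (a1 * a2))
    with (2 * (mu / ((g1 + mu) * s21) + mu / ((g2 + mu) * s12)) * (b1 * b2 / ((g1 + mu) * (g2 + mu))))
    by (field; repeat split; lra).
  replace (S_error * mu) with (2 * (mu / (g1 * s21) + mu / (g2 * s12)) * (b1 * b2 / (g1 * g2)))
    by (unfold S_error; field; repeat split; lra).
  assert (mu / ((g1 + mu) * s21) <= mu / (g1 * s21)) by (apply div_le_compat_l; nra).
  assert (mu / ((g2 + mu) * s12) <= mu / (g2 * s12)) by (apply div_le_compat_l; nra).
  assert (b1 * b2 / ((g1 + mu) * (g2 + mu)) <= b1 * b2 / (g1 * g2)) by (apply div_le_compat_l; nra).
  assert (0 <= mu / ((g1 + mu) * s21)) by (apply Rle_mult_inv_pos; nra).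
  assert (0 <= mu / ((g2 + mu) * s12)) by (apply Rle_mult_inv_pos; nra).
  assert (0 <= b1 * b2 / ((g1 + mu) * (g2 + mu))) by (apply Rle_mult_inv_pos; nra).
  apply Rmult_le_compat; nra.
Qed.

Lemma endemic_S_close r s0 :
  Omega g1 g2 s12 s21 mu (repr_num b1 g1 mu) (repr_num b2 g2 mu) ->
  endemic_root a1 a2 G1 G2 s12 s21 r -> 0 < s0 ->
  ps s12 s21 (repr_num b1 g1 mu) (repr_num b2 g2 mu) s0 = 0 ->
  s0 < 1 /\ Rabs (r - s0) <= S_error * mu.
Proof.
  intros HO Hr Hs0 Hps. destruct (Omega_recip_lt_1 HO) as [Ha1 Ha2].
  pose proof a1_pos as Ha1p. pose proof a2_pos as Ha2p.
  pose proof G1_bounds as HG1. pose proof G2_bounds as HG2.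
  pose proof Hr as (Hr0 & Hr1 & Hr2 & _ & HF).
  rewrite repr_num_recip1, repr_num_recip2 in Hps.
  assert (HR1 : 1 < / a1) by (rewrite <- Rinv_1; apply Rinv_lt_iff; lra).
  assert (HR2 : 1 < / a2) by (rewrite <- Rinv_1; apply Rinv_lt_iff; lra).
  destruct (ps_root_dist (/ a1) (/ a2) s12 s21 s0 r Hs12 Hs21 HR1 HR2 Hs0 Hps ltac:(lra))
    as [Hs01 Hdist].
  split; auto.
  rewrite ps_recip_eq in Hdist by lra.
  pose proof (F_perturbation a1 a2 G1 G2 s12 s21 r ltac:(lra) ltac:(lra) ltac:(lra) ltac:(lra)
    Hs12 Hs21 ltac:(lra)) as Hpert.
  rewrite HF, Rminus_0_l, Rabs_Ropp in Hpert.
  rewrite Rabs_mult, Rabs_Ropp, (Rabs_pos_eq (s12 * s21 / (a1 * a2))) in Hdist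
    by (apply Rle_mult_inv_pos; nra).
  eapply Rle_trans; [| apply F_perturbation_scaled_le].
  apply (Rmult_le_reg_l (s12 * s21)); [nra |].
  eapply Rle_trans; [exact Hdist |].
  replace (s12 * s21 * (2 * ((1 - G1) / s21 + (1 - G2) / s12) / (a1 * a2)))
    with (s12 * s21 / (a1 * a2) * (2 * ((1 - G1) / s21 + (1 - G2) / s12))) by (field; lra).
  apply Rmult_le_compat_l; [apply Rle_mult_inv_pos; nra | exact Hpert].
Qed.

Lemma endemic_infected r : endemic_root a1 a2 G1 G2 s12 s21 r ->
  sI1 (endemic_state r) = mu * infected_ratio g1 s12 a2 mu r /\
  sI2 (endemic_state r) = mu * infected_ratio g2 s21 a1 mu r.
Proof.
  intros Hr. pose proof Hr as (Hr0 & Hr1 & Hr2 & _).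
  pose proof G1_bounds as HG1. pose proof G2_bounds as HG2.
  destruct (endemic_root_reduced_eq _ _ _ _ _ _ HG1 HG2 Hs12 Hs21 r Hr) as (HE & _ & _).
  destruct (reduced_eq_infected _ _ _ _ _ _ Hs12 Hs21 _ _ _ HE) as [E1 E2].
  unfold endemic_state, state_of, infected_ratio; cbn [sI1 sI2].
  assert (EG1 : (g1 + mu) * G1 = g1) by (field; lra).
  assert (EG2 : (g2 + mu) * G2 = g2) by (field; lra).
  set (u := lam1 a1 a2 G1 G2 s12 s21 r) in *. set (v := lam2 a1 a2 G1 G2 s12 s21 r) in *.
  clearbody u v.
  set (A1 := a1) in *. set (A2 := a2) in *. set (K1 := G1) in *. set (K2 := G2) in *.
  clearbody A1 A2 K1 K2.
  assert (D1 : (g1 + mu) * (K1 * r + (A2 - r)) = (g1 + mu) * A2 - mu * r)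
    by (transitivity ((g1 + mu) * K1 * r + (g1 + mu) * (A2 - r)); [ring | rewrite EG1; ring]).
  assert (D2 : (g2 + mu) * (K2 * r + (A1 - r)) = (g2 + mu) * A1 - mu * r)
    by (transitivity ((g2 + mu) * K2 * r + (g2 + mu) * (A1 - r)); [ring | rewrite EG2; ring]).
  assert (0 < K1 * r + (A2 - r)) by nra. assert (0 < K2 * r + (A1 - r)) by nra.
  split.
  - rewrite <- D1. replace ((A2 - r) * (r + s12 * (1 - r))) with (s12 * (u * r * (K1 * r + (A2 - r))))
      by (rewrite E1; field; lra).
    field. lra.
  - rewrite <- D2. replace ((A1 - r) * (r + s21 * (1 - r))) with (s21 * (v * r * (K2 * r + (A1 - r))))
      by (rewrite E2; field; lra).
    field. lra.
Qed.

Lemma endemic_state_asymptotics r s0 :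
  Omega g1 g2 s12 s21 mu (repr_num b1 g1 mu) (repr_num b2 g2 mu) ->
  endemic_root a1 a2 G1 G2 s12 s21 r -> 0 < s0 ->
  ps s12 s21 (repr_num b1 g1 mu) (repr_num b2 g2 mu) s0 = 0 ->
  Rabs (sS (endemic_state r) - s0) <= endemic_error * mu /\
  Rabs (sI1 (endemic_state r) - mu * coef_b1 g1 s12 (repr_num b2 g2 mu) s0) <= endemic_error * mu ^ 2 /\
  Rabs (sI2 (endemic_state r) - mu * coef_b2 g2 s21 (repr_num b1 g1 mu) s0) <= endemic_error * mu ^ 2.
Proof.
  intros HO Hr Hs0 Hps.
  destruct (endemic_S_close r s0 HO Hr Hs0 Hps) as [Hs01 HS].
  destruct (Omega_recip_lt_1 HO) as [Ha1 Ha2].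
  pose proof Hr as (Hr0 & Hr1 & Hr2 & _).
  destruct endemic_error_ge as (C0 & C1 & C2). pose proof S_error_pos.
  destruct (endemic_infected r Hr) as [EI1 EI2].
  rewrite repr_num_recip1, repr_num_recip2, EI1, EI2.
  unfold coef_b2. fold (coef_b1 g2 s21 (/ a1) s0).
  rewrite !coef_b1_ratio by (auto using a1_pos, a2_pos; lra).
  assert (Hmu2 : 0 <= mu ^ 2) by (apply pow_le; lra).
  split; [| split].
  - apply Rle_trans with (S_error * mu); [exact HS | apply Rmult_le_compat_r; lra].
  - eapply Rle_trans; [apply (infected_ratio_close g1 s12 a2 (g2 / b2) mu r s0 S_error) |
      apply Rmult_le_compat_r]; auto using a2_lower; lra.
  - eapply Rle_trans; [apply (infected_ratio_close g2 s21 a1 (g1 / b1) mu r s0 S_error) |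
      apply Rmult_le_compat_r]; auto using a1_lower; lra.
Qed.

End Model.

Theorem proposition4p1 (beta1 beta2 gamma1 gamma2 sigma12 sigma21 : R) :
  0 < beta1 -> 0 < beta2 -> 0 < gamma1 -> 0 < gamma2 ->
  0 < sigma21 -> sigma21 <= sigma12 -> sigma12 <= 1 ->
  exists mustar : R, 0 < mustar /\ mustar < Rmin gamma1 gamma2 /\
  (* (i): the O(mu), O(mu^2) constants are uniform for mu in (0, mustar) *)
  (exists C : R, 0 < C /\
   forall mu : R, 0 < mu -> mu < mustar ->
   let Rn1 := repr_num beta1 gamma1 mu in
   let Rn2 := repr_num beta2 gamma2 mu in
   Omega gamma1 gamma2 sigma12 sigma21 mu Rn1 Rn2 ->
   exists x : state,
     (steady_state beta1 beta2 gamma1 gamma2 sigma12 sigma21 mu x /\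
      feasible x /\ 0 < sI1 x /\ 0 < sI2 x) /\
     (forall y : state,
        steady_state beta1 beta2 gamma1 gamma2 sigma12 sigma21 mu y ->
        feasible y -> 0 < sI1 y -> 0 < sI2 y -> y = x) /\
     (forall s0 : R, 0 < s0 -> ps sigma12 sigma21 Rn1 Rn2 s0 = 0 ->
        Rabs (sS x - s0) <= C * mu /\
        Rabs (sI1 x - mu * coef_b1 gamma1 sigma12 Rn2 s0) <= C * mu ^ 2 /\
        Rabs (sI2 x - mu * coef_b2 gamma2 sigma21 Rn1 s0) <= C * mu ^ 2)) /\
  (* (ii) *)
  (forall mu : R, 0 < mu -> mu < mustar ->
   let Rn1 := repr_num beta1 gamma1 mu in
   let Rn2 := repr_num beta2 gamma2 mu in
   ~ Omega gamma1 gamma2 sigma12 sigma21 mu Rn1 Rn2 ->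
   ~ exists x : state,
       steady_state beta1 beta2 gamma1 gamma2 sigma12 sigma21 mu x /\
       feasible x /\ 0 < sI1 x /\ 0 < sI2 x).
Proof.
  (* [sigma21 <= sigma12] only serves to make [sigma12] positive, and [mu] need not be small. *)
  intros Hb1 Hb2 Hg1 Hg2 Hs21 Hs Hs12.
  assert (Hs12' : 0 < sigma12 <= 1) by lra. assert (Hs21' : 0 < sigma21 <= 1) by lra.
  assert (Hmin : 0 < Rmin gamma1 gamma2) by (apply Rmin_glb_lt; lra).
  exists (Rmin gamma1 gamma2 / 2). split; [lra | split; [lra | split]].
  - exists (endemic_error beta1 beta2 gamma1 gamma2 sigma12 sigma21).
    split; [apply endemic_error_pos; auto |].
    intros mu Hmu _ Rn1 Rn2 HO.
    destruct (endemic_root_of_Omega beta1 beta2 gamma1 gamma2 sigma12 sigma21 mu) as [r Hr]; auto.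
    exists (endemic_state beta1 beta2 gamma1 gamma2 sigma12 sigma21 mu r).
    split; [| split].
    + apply endemic_state_spec; auto.
    + intros y. apply endemic_state_unique; auto.
    + intros s0 Hs0 Hps. apply endemic_state_asymptotics; auto.
  - intros mu Hmu _ Rn1 Rn2. apply no_endemic_state; auto.
Qed.
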